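(* Let $R$ be a ring which is $2$-primal, local, and strongly weakly nil-clean. Then the $2\times 2$ matrix ring ${\rm M}_2(R)$ is a GSWNC ring.
   Context: All rings are associative with identity. An element $a$ of a ring $S$ is called strongly weakly nil-clean if there exist an idempotent $e \in S$ and a nilpotent $q \in S$ with $eq = qe$ such that $a = q + e$ or $a = q - e$. A ring is strongly weakly nil-clean if all its elements are strongly weakly nil-clean. A ring $S$ is called GSWNC if every non-invertible element of $S$ is strongly weakly nil-clean. A ring is $2$-primal if its prime radical (the intersection of all prime ideals) equals its set of nilpotent elements. *)

From mathcomp Require Import all_boot all_algebra.
Set Implicit Arguments. Unset Strict Implicit. Unset Printing Implicit Defensive.
Import GRing.Theory.
Local Open Scope ring_scope.

Section RingDefs.
Variable R : nzRingType.

Definition idempotent (e : R) : Prop := e * e = e.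
Definition nilpotent (q : R) : Prop := exists n : nat, q ^+ n = 0.
Definition invertible (a : R) : Prop := exists b : R, a * b = 1 /\ b * a = 1.

Definition strongly_weakly_nil_clean_elt (a : R) : Prop :=
  exists e q : R, idempotent e /\ nilpotent q /\ e * q = q * e /\
    (a = q + e \/ a = q - e).

Definition strongly_weakly_nil_clean_ring : Prop :=
  forall a : R, strongly_weakly_nil_clean_elt a.

Definition GSWNC : Prop :=
  forall a : R, ~ invertible a -> strongly_weakly_nil_clean_elt a.

Definition left_ideal (I : R -> Prop) : Prop :=
  I 0 /\ (forall x y, I x -> I y -> I (x - y)) /\ (forall r x, I x -> I (r * x)).
Definition ideal (I : R -> Prop) : Prop :=
  left_ideal I /\ (forall r x, I x -> I (x * r)).

Definition maximal_left_ideal (M : R -> Prop) : Prop :=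
  left_ideal M /\ ~ M 1 /\
  (forall I, left_ideal I -> ~ I 1 -> (forall x, M x -> I x) -> forall x, I x -> M x).

Definition local_ring : Prop :=
  exists M, maximal_left_ideal M /\
    forall M', maximal_left_ideal M' -> forall x, M' x <-> M x.

Definition prime_ideal (P : R -> Prop) : Prop :=
  ideal P /\ ~ P 1 /\
  (forall a b, (forall r, P (a * r * b)) -> P a \/ P b).

Definition prime_radical (x : R) : Prop := forall P, prime_ideal P -> P x.

Definition two_primal : Prop := forall x : R, prime_radical x <-> nilpotent x.

End RingDefs.

(* In a local ring the only idempotents are 0 and 1, so strong weak
   nil-cleanness says that every element is congruent to 0, 1 or -1 modulo
   the nilpotents; for a 2-primal ring these form an ideal N, hence elements
   outside N are units and commutators lie in N.  A 2x2 matrix with entries in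
   N is nilpotent: its entries lie in every prime ideal of R, and the corner
   of a prime ideal of M_2(R) is a prime ideal of R.  Consequently X is
   invertible unless det X lies in N, and then Cayley-Hamilton modulo N,
   applied with tr X = eps (mod N) for some eps in {0, 1, -1}, shows that X^2,
   X - X^2 or X + X^2 is nilpotent.  In the last two cases an idempotent e
   commuting with X is lifted from X (or from -X), giving X = q + e or
   X = q - e with q nilpotent. *)

From mathcomp Require Import all_boot all_algebra.
From mathcomp Require Import ring zify boolp classical_sets.
Set Implicit Arguments. Unset Strict Implicit. Unset Printing Implicit Defensive.
Import GRing.Theory.
Local Open Scope ring_scope.
Local Open Scope classical_set_scope.

Lemma ex_maximal_superset T (F : set T -> Prop) (I0 : set T) :
  F I0 ->
  (forall C : set (set T), C `<=` F -> total_on C subset -> C !=set0 ->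
     F (\bigcup_(X in C) X)) ->
  exists M, [/\ F M, I0 `<=` M & forall J, F J -> M `<=` J -> J `<=` M].
Proof.
move=> FI0 Fchain.
pose G := [set X | F X /\ I0 `<=` X].
have [A [GA Amax]] :
    exists A, ([set set0] `|` G) A /\ forall B, A `<` B -> ~ ([set set0] `|` G) B.
  apply: Zorn_bigcup => C CP Ctot.
  have -> : \bigcup_(X in C) X = \bigcup_(X in C `&` G) X.
    apply/seteqP; split=> x [X CX Xx]; last by exists X => //; case: CX.
    by case: (CP X CX) => [X0|GX]; [move: Xx; rewrite X0 | exists X].
  have [[X [CX GX]]|noG] := pselect (C `&` G !=set0); last first.
    by left; apply/seteqP; split=> // x [X CGX _]; apply: noG; exists X.
  right; split; last by move=> x /(proj2 GX) I0x; exists X.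
  apply: Fchain; first by move=> Y [_ []].
  - by move=> Y Z [CY _] [CZ _]; exact: Ctot.
  - by exists X.
have {GA} [FA I0A] : G A.
  case: GA => [A0|//]; rewrite A0.
  have [|I0n0] := pselect (I0 `<=` set0).
    by rewrite subset0 => I00; rewrite -I00; split.
  by exfalso; apply: (Amax I0); [rewrite A0; split | right; split].
exists A; split=> // J FJ AJ x Jx; apply: contrapT => Anx.
by apply: (Amax J); [split=> // /(_ x Jx) | right; split=> //; apply: subset_trans AJ].
Qed.

Section Nilpotent.
Variable S : nzRingType.
Implicit Types x y z : S.

Lemma nilpotent0 : nilpotent (0 : S).
Proof. by exists 1%N; rewrite expr1. Qed.

Lemma exprn_eq0_leq x m n : x ^+ m = 0 -> (m <= n)%N -> x ^+ n = 0.
Proof. by move=> xm0 /subnKC <-; rewrite exprD xm0 mul0r. Qed.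

Lemma nilpotentN x : nilpotent x -> nilpotent (- x).
Proof. by case=> n xn0; exists n; rewrite exprNn xn0 mulr0. Qed.

Lemma nilpotentM_comm x y : GRing.comm x y -> nilpotent x -> nilpotent (x * y).
Proof. by move=> cxy [n xn0]; exists n; rewrite exprMn_comm // xn0 mul0r. Qed.

Lemma nilpotentD_comm x y :
  GRing.comm x y -> nilpotent x -> nilpotent y -> nilpotent (x + y).
Proof.
move=> cxy [m xm0] [n yn0]; exists (m + n)%N.
rewrite exprDn_comm //; apply: big1 => -[i /= _] _.
have [ni|ilt] := leqP n i; first by rewrite (exprn_eq0_leq yn0 ni) mulr0 mul0rn.
by rewrite (@exprn_eq0_leq _ m) ?mul0r ?mul0rn //; lia.
Qed.

Lemma invertibleN x : invertible x -> invertible (- x).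
Proof. by case=> y [xy yx]; exists (- y); rewrite !mulrNN. Qed.

Lemma invertible_lr x y z : y * x = 1 -> x * z = 1 -> invertible x.
Proof.
move=> yx xz; exists z; split=> //.
suff -> : z = y by [].
by rewrite -[z]mul1r -yx -mulrA xz mulr1.
Qed.

Lemma invertible1D x : nilpotent x -> invertible (1 + x).
Proof.
case=> n xn0; pose s := \sum_(i < n) (- x) ^+ i.
have cs : GRing.comm (1 + x) s.
  apply: commr_sum => i _; apply/commrX/commrN.
  by rewrite /GRing.comm mulrDl mulrDr mul1r mulr1.
have xs : (1 + x) * s = 1.
  have := subrX1 (- x) n.
  by rewrite exprNn xn0 mulr0 sub0r -opprD mulNr addrC => /oppr_inj /esym.
by apply: (@invertible_lr _ s s) => //; rewrite -cs.
Qed.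

Lemma invertible_mod_nilpotent x y z :
  nilpotent (x * y - 1) -> nilpotent (z * x - 1) -> invertible x.
Proof.
move=> /invertible1D [u [xyu _]] /invertible1D [v [_ vzx]].
rewrite addrC subrK in xyu; rewrite addrC subrK in vzx.
by apply: (@invertible_lr _ (v * z) (y * u)); [rewrite -mulrA | rewrite mulrA].
Qed.

End Nilpotent.

Section IdempotentLifting.
Variable S : nzRingType.

Section Evaluation.
Variable a : S.
Local Notation ev := (horner_morph (commr_int a)).

Lemma ev_comm (u v : {poly int}) : GRing.comm (ev u) (ev v).
Proof. by rewrite /GRing.comm -!rmorphM mulrC. Qed.

Lemma comm_ev y (u : {poly int}) : GRing.comm a y -> GRing.comm (ev u) y.
Proof.
move=> cay; apply/commr_sym/commr_horner; first exact/commr_sym.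
by move=> i; rewrite coef_map; apply: commr_sym; apply: commr_int.
Qed.

End Evaluation.

Lemma idempotent_lift (a : S) : nilpotent (a - a * a) ->
  exists e : S, [/\ idempotent e, nilpotent (a - e)
    & forall y, GRing.comm a y -> GRing.comm e y].
Proof.
(* [p] maps [a] to [3a^2 - 2a^3]; since [p - p^2 = q^2 (3 + 4q)] for
   [q = a - a^2], iterating [p] shrinks the nilpotency index of [q]. *)
pose q : {poly int} := 'X - 'X * 'X.
pose p : {poly int} := 3%:R * 'X * 'X - 2%:R * 'X * 'X * 'X.
have p_sub_sqr : p - p * p = q * q * (3%:R + 4%:R * q) by rewrite /p /q; ring.
have X_sub_p : 'X - p = q * (1 - 2%:R * 'X) by rewrite /p /q; ring.
case=> n; elim/ltn_ind: n a => n IHn a an0.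
have [n_le1|n_gt1] := leqP n 1.
  case: n {IHn} n_le1 an0 => [_ /eqP|[_|//]]; first by rewrite expr0 oner_eq0.
  rewrite expr1 => /eqP; rewrite subr_eq0 => /eqP aa.
  by exists a; split=> //; rewrite subrr; apply: nilpotent0.
have ev_q : horner_morph (commr_int a) q = a - a * a.
  by rewrite !rmorphB !rmorphM /= horner_morphX.
set b := horner_morph (commr_int a) p.
have bn : (b - b * b) ^+ n.-1 = 0.
  rewrite -rmorphM -rmorphB p_sub_sqr rmorphM exprMn_comm; last exact: ev_comm.
  rewrite rmorphM /= ev_q -expr2 -exprM (@exprn_eq0_leq _ _ n) ?mul0r //; lia.
have [e [ee nbe ce]] := IHn n.-1 ltac:(lia) b bn.
have ab_ev : a - b = horner_morph (commr_int a) ('X - p).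
  by rewrite rmorphB /= horner_morphX.
have nab : nilpotent (a - b).
  rewrite ab_ev X_sub_p rmorphM.
  by apply: nilpotentM_comm; [apply: ev_comm | rewrite /= ev_q; exists n].
exists e; split=> // [|y cay]; last by apply/ce/comm_ev.
rewrite -(subrK b a) -addrA; apply: nilpotentD_comm => //.
by rewrite ab_ev; apply: commrB; [apply: ev_comm | apply/commr_sym/ce/ev_comm].
Qed.

End IdempotentLifting.

Section StronglyNilClean.
Variable S : nzRingType.
Implicit Types a : S.

Definition strongly_nil_clean_elt a : Prop :=
  exists e q : S, [/\ idempotent e, nilpotent q, e * q = q * e & a = q + e].

Lemma strongly_nil_clean_sub_sqr a :
  nilpotent (a - a * a) -> strongly_nil_clean_elt a.
Proof.
move=> /idempotent_lift [e [ee nae ce]]; exists e, (a - e); split=> //.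
  by rewrite mulrBr mulrBl ee (ce a).
by rewrite subrK.
Qed.

Lemma strongly_nil_clean_swnc a :
  strongly_nil_clean_elt a -> strongly_weakly_nil_clean_elt a.
Proof. by case=> e [q [ee nq ceq ->]]; exists e, q; do !split=> //; left. Qed.

Lemma strongly_nil_cleanN_swnc a :
  strongly_nil_clean_elt (- a) -> strongly_weakly_nil_clean_elt a.
Proof.
case=> e [q [ee nq ceq /(canRL (@opprK _)) ->]]; exists e, (- q).
by do !split=> //; [apply: nilpotentN | rewrite mulrN mulNr ceq | rewrite opprD; right].
Qed.

Lemma swnc_nilpotent a : nilpotent a -> strongly_weakly_nil_clean_elt a.
Proof.
move=> na; exists 0, a; do !split=> //.
- by rewrite /idempotent mulr0.
- by rewrite mulr0 mul0r.
- by left; rewrite addr0.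
Qed.

Lemma swnc_quadratic a :
  [\/ nilpotent (a * a), nilpotent (a * a - a) | nilpotent (a * a + a)] ->
  strongly_weakly_nil_clean_elt a.
Proof.
case=> [[n a2n0] | /nilpotentN | /nilpotentN].
- by apply: swnc_nilpotent; exists (2 * n)%N; rewrite exprM expr2.
- by rewrite opprB => /strongly_nil_clean_sub_sqr/strongly_nil_clean_swnc.
- rewrite opprD addrC -mulrNN => /strongly_nil_clean_sub_sqr.
  exact: strongly_nil_cleanN_swnc.
Qed.

End StronglyNilClean.

Section Ideals.
Variable S : nzRingType.
Implicit Types (I J : set S) (x y r : S).

Section IdealLemmas.
Variable I : set S.
Hypothesis idI : ideal I.

Lemma ideal0 : I 0.
Proof. by case: idI => -[]. Qed.

Lemma idealB x y : I x -> I y -> I (x - y).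
Proof. by case: idI => -[_ [+ _]] _; apply. Qed.

Lemma idealMl r x : I x -> I (r * x).
Proof. by case: idI => -[_ [_ +]] _; apply. Qed.

Lemma idealMr r x : I x -> I (x * r).
Proof. by case: idI => _; apply. Qed.

Lemma idealN x : I x -> I (- x).
Proof. by rewrite -sub0r; apply/idealB/ideal0. Qed.

Lemma idealD x y : I x -> I y -> I (x + y).
Proof. by move=> Ix Iy; rewrite -[y]opprK; apply/idealB/idealN. Qed.

End IdealLemmas.

Lemma left_ideal_bigcup (C : set (set S)) : C `<=` @left_ideal S ->
  total_on C subset -> C !=set0 -> left_ideal (\bigcup_(X in C) X).
Proof.
move=> CL Ctot [X0 CX0]; split; first by exists X0; case: (CL X0 CX0).
split=> [x y [X CX Xx] [Y CY Yy] | r x [X CX Xx]]; last first.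
  by exists X => //; case: (CL X CX) => _ [_]; apply.
have [XY|YX] := Ctot X Y CX CY.
  by exists Y => //; case: (CL Y CY) => _ [+ _]; apply; first exact: XY.
by exists X => //; case: (CL X CX) => _ [+ _]; apply=> //; exact: YX.
Qed.

Lemma ideal_bigcup (C : set (set S)) : C `<=` @ideal S ->
  total_on C subset -> C !=set0 -> ideal (\bigcup_(X in C) X).
Proof.
move=> CI Ctot C0; split; first by apply: left_ideal_bigcup => // X /CI [].
by move=> r x [X CX Xx]; exists X => //; exact: (idealMr (CI X CX) r Xx).
Qed.

Lemma prime_radical_ideal : ideal (@prime_radical S).
Proof.
split; first split; first by move=> P [IP _]; apply: ideal0.
  split=> [x y Px Py | r x Px] P PP; have [IP _] := PP.
    exact: (idealB IP (Px P PP) (Py P PP)).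
  exact: (idealMl IP r (Px P PP)).
by move=> r x Px P PP; have [IP _] := PP; exact: (idealMr IP r (Px P PP)).
Qed.

Lemma ideal_colonl I b : ideal I -> ideal (fun y => forall r, I (y * r * b)).
Proof.
move=> idI; split; first split.
- by move=> r; rewrite !mul0r; apply: ideal0.
- split=> [x y Ix Iy r | s x Ix r]; first by rewrite !mulrBl; apply: idealB.
  by rewrite -!mulrA; apply: (idealMl idI); rewrite mulrA; apply: Ix.
- by move=> s x Ix r; rewrite -(mulrA x); apply: Ix.
Qed.

Lemma ideal_colonr I a : ideal I -> ideal (fun y => forall r, I (a * r * y)).
Proof.
move=> idI; split; first split.
- by move=> r; rewrite mulr0; apply: ideal0.
- split=> [x y Ix Iy r | s x Ix r]; first by rewrite mulrBr; apply: idealB.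
  by rewrite mulrA -(mulrA a); apply: Ix.
- by move=> s x Ix r; rewrite mulrA; apply: idealMr.
Qed.

Lemma ideal_zero : ideal [set 0 : S].
Proof.
split; first split=> //; first split.
- by move=> x y /= -> ->; rewrite subr0.
- by move=> r x /= ->; rewrite mulr0.
by move=> r x /= ->; rewrite mul0r.
Qed.

(* An ideal maximal among those avoiding the powers of [x] is prime. *)
Lemma prime_radical_nilpotent x : prime_radical x -> nilpotent x.
Proof.
move=> radx; apply: contrapT => nx.
pose F := [set J : set S | ideal J /\ forall k, ~ J (x ^+ k)].
have [P [[idP Pnx] _ Pmax]] : exists P, [/\ F P, [set 0] `<=` P
                                      & forall J, F J -> P `<=` J -> J `<=` P].
  apply: ex_maximal_superset.
    by split=> [|k /= xk0]; [apply: ideal_zero | apply: nx; exists k].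
  move=> C CF Ctot C0; split; first by apply: ideal_bigcup => // J /CF [].
  by move=> k [J /CF [_ Jnx]]; apply: Jnx.
have meets J y : ideal J -> P `<=` J -> J y -> ~ P y -> exists k, J (x ^+ k).
  move=> idJ PJ Jy Pny; apply: contrapT => Jnx; apply/Pny/(Pmax J) => //.
  by split=> // k Jk; apply: Jnx; exists k.
apply: (Pnx 1%N); rewrite expr1; apply: radx; split=> //; split.
  by move=> P1; apply: (Pnx 0%N); rewrite expr0.
move=> a b Pab; apply: contrapT => /not_orP [Pna Pnb].
have [k Pk] := meets _ a (ideal_colonl b idP)
  (fun y Py r => idealMr idP b (idealMr idP r Py)) Pab Pna.
have [j Pj] := meets _ b (ideal_colonr (x ^+ k) idP)
  (fun y Py r => idealMl idP _ Py) Pk Pnb.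
by apply: (Pnx (k + j)%N); rewrite exprD -[x ^+ k]mulr1; apply: Pj.
Qed.

End Ideals.

Section LocalRing.
Variable S : nzRingType.

Lemma ex_maximal_left_ideal (L : set S) : left_ideal L -> ~ L 1 ->
  exists M, maximal_left_ideal M /\ L `<=` M.
Proof.
move=> idL L1.
case: (@ex_maximal_superset _ [set J | left_ideal J /\ ~ J 1] L (conj idL L1))
    => [C CF Ctot C0 | M [[idM M1] LM Mmax]].
  split; first by apply: left_ideal_bigcup => // J /CF [].
  by case=> J /CF [_].
by exists M; do !split=> //; move=> I idI I1; apply: Mmax.
Qed.

Lemma left_ideal_principal (x : S) : left_ideal [set y | exists r, y = r * x].
Proof.
split; first by exists 0; rewrite mul0r.
split=> [_ _ [r ->] [s ->] | t _ [r ->]]; first by exists (r - s); rewrite mulrBl.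
by exists (t * r); rewrite mulrA.
Qed.

Lemma principal_left_ideal_proper (x y : S) :
  x * y = 0 -> y <> 0 -> ~ exists r, 1 = r * x.
Proof. by move=> xy0 y0 [r rx1]; apply: y0; rewrite -[y]mul1r rx1 -mulrA xy0 mulr0. Qed.

(* For [e <> 0, 1] the left ideals generated by [e] and [1 - e] are proper, so
   both lie in the unique maximal left ideal, which then contains [1]. *)
Lemma local_idempotent (e : S) : local_ring S -> idempotent e -> e = 0 \/ e = 1.
Proof.
case=> M [[[_ [Msub Mmul]] [M1 _]] Muniq] ee; apply: contrapT => /not_orP [e0 e1].
have inM x y : x * y = 0 -> y <> 0 -> M x.
  move=> xy0 y0; have [M' [maxM' xM']] := ex_maximal_left_ideal
    (left_ideal_principal x) (principal_left_ideal_proper xy0 y0).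
  by apply/(Muniq _ maxM')/xM'; exists 1; rewrite mul1r.
have M1e : M (1 - e) by apply: (inM _ e) => //; rewrite mulrBl ee mul1r subrr.
have Me : M e.
  apply: (inM _ (1 - e)); first by rewrite mulrBr ee mulr1 subrr.
  by move/eqP; rewrite subr_eq0 => /eqP/esym.
by apply: M1; have := Msub _ _ M1e (Mmul (-1) _ Me); rewrite mulN1r opprK subrK.
Qed.

End LocalRing.

Section TwoPrimal.
Variable R : nzRingType.
Hypothesis tpR : two_primal R.
Implicit Types x y : R.

Lemma nilpotent_ideal : ideal (@nilpotent R).
Proof.
have -> : @nilpotent R = @prime_radical R.
  by apply/funext => x; apply/propext; split=> /tpR.
exact: prime_radical_ideal.
Qed.

Lemma nilpotentB x y : nilpotent x -> nilpotent y -> nilpotent (x - y).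
Proof. exact: (idealB nilpotent_ideal). Qed.

Lemma nilpotentD x y : nilpotent x -> nilpotent y -> nilpotent (x + y).
Proof. exact: (idealD nilpotent_ideal). Qed.

Lemma nilpotentMl x y : nilpotent y -> nilpotent (x * y).
Proof. exact: (idealMl nilpotent_ideal). Qed.

Lemma nilpotentMr x y : nilpotent x -> nilpotent (x * y).
Proof. exact: (idealMr nilpotent_ideal). Qed.

End TwoPrimal.

Section LocalSWNC.
Variable R : nzRingType.
Hypotheses (tpR : two_primal R) (locR : local_ring R)
  (swR : strongly_weakly_nil_clean_ring R).
Implicit Types x y : R.

Lemma local_swnc_trichotomy x :
  [\/ nilpotent x, nilpotent (x - 1) | nilpotent (x + 1)].
Proof.
have [e [q [ee [nq [_ xqe]]]]] := swR x.
case: (local_idempotent locR ee) xqe => -> [] ->.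
- by constructor 1; rewrite addr0.
- by constructor 1; rewrite subr0.
- by constructor 2; rewrite addrK.
- by constructor 3; rewrite subrK.
Qed.

Lemma local_swnc_invertible x : ~ nilpotent x -> invertible x.
Proof.
case: (local_swnc_trichotomy x) => [//|nx1|nx1] _.
  by rewrite -(subrK 1 x) addrC; apply: invertible1D.
rewrite -[x]opprK -(addrK 1 x) opprB.
by apply: invertibleN; apply: invertible1D; apply: nilpotentN.
Qed.

Lemma commutator_subl x y c :
  GRing.comm y c -> x * y - y * x = (x - c) * y - y * (x - c).
Proof. by move=> cyc; rewrite mulrBl mulrBr cyc opprB addrA subrK. Qed.

Lemma nilpotent_commutator x y : nilpotent (x * y - y * x).
Proof.
have nB z : nilpotent z -> nilpotent (z * y - y * z).
  by move=> nz; apply: (nilpotentB tpR); [apply: nilpotentMr | apply: nilpotentMl].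
case: (local_swnc_trichotomy x) => [|nx|nx]; first exact: nB.
  by rewrite (commutator_subl x (commr1 y)); apply: nB.
by rewrite (commutator_subl x (commrN1 y)) opprK; apply: nB.
Qed.

End LocalSWNC.

Section Matrix2.
Variable R : nzRingType.
Implicit Types a b c d : R.

Definition mx2 a b c d : 'M[R]_2 :=
  \matrix_(i, j) if i == 0 :> nat then (if j == 0 :> nat then a else b)
                 else (if j == 0 :> nat then c else d).

Lemma mx2E (X : 'M[R]_2) : X = mx2 (X 0 0) (X 0 1) (X 1 0) (X 1 1).
Proof.
apply/matrixP => i j; rewrite mxE.
by case: i => [[|[|//]] ?]; case: j => [[|[|//]] ?]; congr (X _ _); apply: val_inj.
Qed.

Lemma eq_mx2 (X Y : 'M[R]_2) :
  X 0 0 = Y 0 0 -> X 0 1 = Y 0 1 -> X 1 0 = Y 1 0 -> X 1 1 = Y 1 1 -> X = Y.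
Proof. by move=> e00 e01 e10 e11; rewrite (mx2E X) (mx2E Y) e00 e01 e10 e11. Qed.

Lemma mulmx2 a b c d a' b' c' d' :
  mx2 a b c d * mx2 a' b' c' d' =
  mx2 (a * a' + b * c') (a * b' + b * d') (c * a' + d * c') (c * b' + d * d').
Proof. by apply: eq_mx2; rewrite !mxE !big_ord_recl big_ord0 !mxE /= !addr0. Qed.

Lemma addmx2 a b c d a' b' c' d' :
  mx2 a b c d + mx2 a' b' c' d' = mx2 (a + a') (b + b') (c + c') (d + d').
Proof. by apply: eq_mx2; rewrite !mxE. Qed.

Lemma oppmx2 a b c d : - mx2 a b c d = mx2 (- a) (- b) (- c) (- d).
Proof. by apply: eq_mx2; rewrite !mxE. Qed.

Lemma submx2 a b c d a' b' c' d' :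
  mx2 a b c d - mx2 a' b' c' d' = mx2 (a - a') (b - b') (c - c') (d - d').
Proof. by rewrite oppmx2 addmx2. Qed.

Lemma scalar_mx2 x : x%:M = mx2 x 0 0 x.
Proof. by apply: eq_mx2; rewrite !mxE. Qed.

Lemma mxtrace_mx2 a b c d : \tr (mx2 a b c d) = a + d.
Proof. by rewrite /mxtrace !big_ord_recl big_ord0 !mxE /= addr0. Qed.

Lemma mx2_0 : 0 = mx2 0 0 0 0 :> 'M[R]_2.
Proof. by apply: eq_mx2; rewrite !mxE. Qed.

Definition det2 (X : 'M[R]_2) : R := X 0 0 * X 1 1 - X 0 1 * X 1 0.

Definition adj2 (X : 'M[R]_2) : 'M[R]_2 := mx2 (X 1 1) (- X 0 1) (- X 1 0) (X 0 0).

Lemma adj2E (X : 'M[R]_2) : adj2 X = (\tr X)%:M - X.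
Proof.
rewrite [in RHS](mx2E X) mxtrace_mx2 scalar_mx2 submx2.
by rewrite addrK addrC addKr !sub0r.
Qed.

End Matrix2.

Definition nilpotent_entries (R : nzRingType) m n (X : 'M[R]_(m, n)) :=
  forall i j, nilpotent (X i j).

Section NilpotentEntries.
Variable R : nzRingType.
Hypothesis tpR : two_primal R.
Implicit Types a b c d : R.

Lemma nilpotent_entriesD m n (X Y : 'M[R]_(m, n)) :
  nilpotent_entries X -> nilpotent_entries Y -> nilpotent_entries (X + Y).
Proof. by move=> nX nY i j; rewrite mxE; apply: nilpotentD. Qed.

Lemma nilpotent_entriesN m n (X : 'M[R]_(m, n)) :
  nilpotent_entries X -> nilpotent_entries (- X).
Proof. by move=> nX i j; rewrite mxE; apply: nilpotentN. Qed.

Lemma nilpotent_entriesMl m n p (X : 'M[R]_(m, n)) (Y : 'M[R]_(n, p)) :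
  nilpotent_entries Y -> nilpotent_entries (X *m Y).
Proof.
move=> nY i j; rewrite mxE; apply: (big_ind _ (nilpotent0 _)) => [|k _].
  exact: nilpotentD.
exact: nilpotentMl.
Qed.

Lemma nilpotent_entriesMr m n p (X : 'M[R]_(m, n)) (Y : 'M[R]_(n, p)) :
  nilpotent_entries X -> nilpotent_entries (X *m Y).
Proof.
move=> nX i j; rewrite mxE; apply: (big_ind _ (nilpotent0 _)) => [|k _].
  exact: nilpotentD.
exact: nilpotentMr.
Qed.

Lemma nilpotent_entries_scalar n x : nilpotent x -> nilpotent_entries (x%:M : 'M[R]_n).
Proof. by move=> nx i j; rewrite mxE; case: (i == j); [|apply: nilpotent0]. Qed.

Lemma nilpotent_entries_mx2 a b c d : nilpotent a -> nilpotent b ->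
  nilpotent c -> nilpotent d -> nilpotent_entries (mx2 a b c d).
Proof. by move=> na nb nc nd [[|[|//]] ?] [[|[|//]] ?]; rewrite mxE. Qed.

End NilpotentEntries.

Section PrimeIdealsMatrix2.
Variable R : nzRingType.
Implicit Types (a b c d x : R) (P : set 'M[R]_2).

Lemma mx2_corner_mul a x :
  mx2 a 0 0 0 * mx2 x 0 0 0 = mx2 (a * x) 0 0 0.
Proof. by rewrite mulmx2 !(mul0r, mulr0, addr0). Qed.

Lemma ideal_mx2 P a b c d : ideal P ->
  P (mx2 a 0 0 0) -> P (mx2 b 0 0 0) -> P (mx2 c 0 0 0) -> P (mx2 d 0 0 0) ->
  P (mx2 a b c d).
Proof.
move=> idP Pa Pb Pc Pd.
have -> : mx2 a b c d = mx2 a 0 0 0 + mx2 b 0 0 0 * mx2 0 1 0 0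
    + mx2 0 0 1 0 * mx2 c 0 0 0 + mx2 0 0 1 0 * mx2 d 0 0 0 * mx2 0 1 0 0.
  by rewrite !mulmx2 !addmx2 !(mul0r, mulr0, mul1r, mulr1, addr0, add0r).
apply: (idealD idP); last by apply: (idealMr idP); apply: (idealMl idP).
apply: (idealD idP); last exact: (idealMl idP).
by apply: (idealD idP) => //; apply: (idealMr idP).
Qed.

Lemma prime_ideal_corner P : prime_ideal P -> prime_ideal (fun x => P (mx2 x 0 0 0)).
Proof.
case=> idP [P1 Pprime]; split; first split; first split.
- by rewrite -mx2_0; apply: (ideal0 idP).
- split=> [x y Px Py | r x Px]; first by rewrite -[0]subr0 -submx2; apply: (idealB idP).
  by rewrite -mx2_corner_mul; apply: (idealMl idP).
- by move=> r x Px; rewrite -mx2_corner_mul; apply: (idealMr idP).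
split=> [P11 | x y Pxy].
  apply: P1; rewrite (scalar_mx2 1 : 1 = _).
  by apply: ideal_mx2 => //; rewrite -mx2_0; apply: (ideal0 idP).
apply: Pprime => X; rewrite (mx2E X) !mulmx2 !(mul0r, mulr0, addr0).
exact: Pxy.
Qed.

Lemma nilpotent_of_entries (X : 'M[R]_2) : two_primal R ->
  nilpotent_entries X -> nilpotent X.
Proof.
move=> tpR nX; apply: prime_radical_nilpotent => P PP; rewrite (mx2E X).
have corner i j : P (mx2 (X i j) 0 0 0).
  exact: (proj2 (tpR _) (nX i j) _ (prime_ideal_corner PP)).
by apply: ideal_mx2; [case: PP|..].
Qed.

End PrimeIdealsMatrix2.

Section Adjugate2.
Variable R : nzRingType.
Hypotheses (tpR : two_primal R) (commR : forall x y : R, nilpotent (x * y - y * x)).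
Implicit Types X : 'M[R]_2.

Lemma nilpotent_entries_mul_adj2 X : nilpotent_entries (X * adj2 X - (det2 X)%:M).
Proof.
rewrite /adj2 /det2 {1}(mx2E X) scalar_mx2 mulmx2 submx2.
apply: nilpotent_entries_mx2 => //.
- by rewrite mulrN subrr; apply: nilpotent0.
- by rewrite mulrN subr0 addrC.
- by rewrite mulrN subr0.
- by rewrite mulrN opprB addrACA (addrC (- _)); apply: nilpotentD.
Qed.

Lemma nilpotent_entries_adj2_mul X : nilpotent_entries (adj2 X * X - (det2 X)%:M).
Proof.
rewrite /adj2 /det2 {5}(mx2E X) scalar_mx2 mulmx2 submx2.
apply: nilpotent_entries_mx2 => //.
- by rewrite mulNr opprB addrA subrK.
- by rewrite mulNr subr0.
- by rewrite mulNr subr0 addrC.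
- by rewrite mulNr opprB addrACA subrr addr0 addrC.
Qed.

Lemma invertible_det2 X : invertible (det2 X) -> invertible X.
Proof.
case=> u [du ud].
apply: (@invertible_mod_nilpotent _ X (adj2 X * u%:M) (u%:M * adj2 X));
  apply: nilpotent_of_entries => //.
- rewrite -[1](rmorph1 (@scalar_mx R 2)) -du rmorphM mulrA -mulrBl.
  exact/nilpotent_entriesMr/nilpotent_entries_mul_adj2.
- rewrite -[1](rmorph1 (@scalar_mx R 2)) -ud rmorphM -mulrA -mulrBr.
  exact/nilpotent_entriesMl/nilpotent_entries_adj2_mul.
Qed.

Lemma nilpotent_sqr_sub X eps : nilpotent (det2 X) -> nilpotent (\tr X - eps) ->
  nilpotent (X * X - X * eps%:M).
Proof.
move=> ndet ntr; apply: nilpotent_of_entries => //.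
have -> : X * X - X * eps%:M = (X * X - X * (\tr X)%:M + (det2 X)%:M)
                             + (X * (\tr X - eps)%:M - (det2 X)%:M).
  by rewrite [(_ - eps)%:M]rmorphB mulrBr addrACA subrr addr0 addrA subrK.
apply: nilpotent_entriesD => //.
  have -> : X * X - X * (\tr X)%:M + (det2 X)%:M = - (X * adj2 X - (det2 X)%:M).
    by rewrite adj2E mulrBr !opprB addrC.
  exact/nilpotent_entriesN/nilpotent_entries_mul_adj2.
apply: nilpotent_entriesD => //.
  exact/nilpotent_entriesMl/nilpotent_entries_scalar.
exact/nilpotent_entriesN/nilpotent_entries_scalar.
Qed.

End Adjugate2.

Theorem theorem2p38 (R : nzRingType) :
  two_primal R -> local_ring R -> strongly_weakly_nil_clean_ring R ->
  GSWNC ('M[R]_2 : nzRingType).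
Proof.
move=> tpR locR swR X nX.
have commR := nilpotent_commutator tpR locR swR.
have ndet : nilpotent (det2 X).
  apply: contrapT => ndet; apply/nX/(invertible_det2 tpR commR).
  exact: local_swnc_invertible.
have CH := nilpotent_sqr_sub tpR commR ndet.
apply: swnc_quadratic.
case: (local_swnc_trichotomy locR swR (\tr X)) => [n0|n1|nN1].
- by constructor 1; move: (CH 0); rewrite subr0 rmorph0 mulr0 subr0; apply.
- by constructor 2; move: (CH 1); rewrite rmorph1 mulr1; apply.
- by constructor 3; move: (CH (-1)); rewrite opprK rmorphN1 mulrN1 opprK; apply.
Qed.
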